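(* Let $f,g$ satisfy (H1) and (H2) (see context). Let $(\gamma_n)_{n\ge1}$ be positive non-increasing stepsizes with $\gamma_n\in(0,1/L]$, $\theta_0\in\mathrm{Dom}(g)$, and let $\theta_{n+1}=\mathrm{Prox}_{\gamma_{n+1}}(\theta_n-\gamma_{n+1}H_{n+1})$ for some $H_{n+1}\in\Theta$, with $\eta_{n+1}=H_{n+1}-\nabla f(\theta_n)$. Let $\mathcal L=\mathrm{argmin}_\Theta F$. (i) For any $\theta_\star\in\mathcal L$ and any $n\ge m\ge0$, $$\|\theta_{n+1}-\theta_\star\|^2\le\|\theta_m-\theta_\star\|^2-2\sum_{k=m}^n\gamma_{k+1}\langle T_{\gamma_{k+1}}(\theta_k)-\theta_\star,\eta_{k+1}\rangle+2\sum_{k=m}^n\gamma_{k+1}^2\|\eta_{k+1}\|^2.$$ (ii) Assume that for any $\theta_\star\in\mathcal L$ the series $\sum_{n\ge0}\gamma_{n+1}\langle T_{\gamma_{n+1}}(\theta_n)-\theta_\star,\eta_{n+1}\rangle$ converges and $\sum_{n\ge0}\gamma_{n+1}^2\|\eta_{n+1}\|^2<\infty$. Then for any $\theta_\star\in\mathcal L$, $\lim_n\|\theta_n-\theta_\star\|$ exists. If in addition $\sum_n\gamma_n=+\infty$, there exists $\theta_\infty\in\mathcal L$ with $\lim_n\theta_n=\theta_\infty$.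
   Context: $\Theta$ is a finite-dimensional Euclidean space with inner product $\langle\cdot,\cdot\rangle$ and norm $\|\cdot\|$. (H1): $g:\Theta\to(-\infty,+\infty]$ convex, not identically $+\infty$, lower semicontinuous; $f:\Theta\to\mathbb R$ continuously differentiable with $L$-Lipschitz gradient. (H2): $f$ convex and $\mathrm{argmin}_\Theta F\neq\emptyset$, $F=f+g$. $\mathrm{Dom}(g)=\{\theta:|g(\theta)|<\infty\}$. $\mathrm{Prox}_\gamma(\theta)=\mathrm{argmin}_{\vartheta}\{g(\vartheta)+\frac1{2\gamma}\|\vartheta-\theta\|^2\}$, $T_\gamma(\theta)=\mathrm{Prox}_\gamma(\theta-\gamma\nabla f(\theta))$. *)

(* Theta = 'rV[R]_d with the standard Euclidean
   inner product (every finite-dimensional Euclidean space is isometric to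
   such a space). *)
From HB Require Import structures.
From mathcomp Require Import all_boot all_order all_algebra.
From mathcomp Require Import all_classical all_reals all_analysis.
Set Implicit Arguments. Unset Strict Implicit. Unset Printing Implicit Defensive.
Import Order.TTheory GRing.Theory Num.Theory.
Local Open Scope ring_scope.

Section Defs.
Variables (R : realType) (d : nat).
Local Notation V := 'rV[R]_d.

Definition dotp (u v : V) : R := \sum_(i < d) u ord0 i * v ord0 i.
Definition enorm (u : V) : R := Num.sqrt (dotp u u).

Definition is_gradient (f : V -> R) (gradf : V -> V) : Prop :=
  forall x (eps : R), 0 < eps -> exists2 delta : R, 0 < delta &
    forall h : V, enorm h < delta ->
      `|f (x + h) - f x - dotp (gradf x) h| <= eps * enorm h.

Definition lipschitz_with (L : R) (G : V -> V) : Prop :=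
  forall x y, enorm (G x - G y) <= L * enorm (x - y).

Definition convex_real (f : V -> R) : Prop :=
  forall (x y : V) (t : R), 0 < t < 1 ->
    f (t *: x + (1 - t) *: y) <= t * f x + (1 - t) * f y.

Definition no_minfty (g : V -> \bar R) : Prop := forall x, g x != -oo%E.
Definition proper_fun (g : V -> \bar R) : Prop := exists x, g x != +oo%E.
Definition convex_ext (g : V -> \bar R) : Prop :=
  forall (x y : V) (t : R), 0 < t < 1 ->
    (g (t *: x + (1 - t) *: y)%R <= t%:E * g x + (1 - t)%:E * g y)%E.
Definition lsc_ext (g : V -> \bar R) : Prop :=
  forall x (a : R), (a%:E < g x)%E -> exists2 delta : R, 0 < delta &
    forall y, enorm (y - x) < delta -> (a%:E < g y)%E.

Definition dom (g : V -> \bar R) : set V := [set x | g x \is a fin_num].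

Definition Fsum (f : V -> R) (g : V -> \bar R) (x : V) : \bar R :=
  ((f x)%:E + g x)%E.
Definition argmin_set (F : V -> \bar R) : set V :=
  [set x | forall y, (F x <= F y)%E].

Definition is_prox (g : V -> \bar R) (gam : R) (x p : V) : Prop :=
  forall v, (g p + ((enorm (p - x)) ^+ 2 / (2 * gam))%:E
             <= g v + ((enorm (v - x)) ^+ 2 / (2 * gam))%:E)%E.
(* the minimizer (unique and existing under (H1) and gam > 0) *)
Definition prox (g : V -> \bar R) (gam : R) (x : V) : V :=
  xget 0 [set p | is_prox g gam x p].
Definition Tmap (g : V -> \bar R) (gradf : V -> V) (gam : R) (x : V) : V :=
  prox g gam (x - gam *: gradf x).
End Defs.

From HB Require Import structures.
From mathcomp Require Import all_boot all_order all_algebra.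
From mathcomp Require Import all_classical all_reals all_analysis.
From mathcomp Require Import ring lra.
Import Order.TTheory GRing.Theory Num.Theory numFieldTopology.Exports numFieldNormedType.Exports.
Local Open Scope ring_scope.
Local Open Scope classical_set_scope.
Set Implicit Arguments. Unset Strict Implicit. Unset Printing Implicit Defensive.

(* Each step of the perturbed forward-backward scheme is compared with the exact step
   T_γ(θ): the variational inequality of the prox, the descent lemma for f and the
   convexity of f give |θ_{n+1} - θ*|^2 <= |θ_n - θ*|^2 + ε_n - 2 γ_{n+1} (F(θ_{n+1}) - min F),
   where ε_n collects the perturbation terms.  Telescoping gives (i).  When the series of the
   ε_n converges, the sequence |θ_n - θ*|^2 is quasi-Fejér and converges; moreover
   Σ γ_{n+1} (F(θ_{n+1}) - min F) is finite, so if Σ γ_n = +oo the values F(θ_{n+1}) approach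
   min F along a subsequence.  By Bolzano-Weierstrass and lower semicontinuity of F a cluster
   point θ∞ of that subsequence is a minimizer, and since |θ_n - θ∞| converges and has 0 as a
   cluster value, θ_n -> θ∞. *)

Section RealFacts.
Variable R : realType.
Implicit Types (a s w x : nat -> R).

Lemma ler_add_divSn (x y c : R) : 0 <= c ->
  (forall N : nat, x <= y + c / N.+1%:R) -> x <= y.
Proof.
move=> c0 h; apply/ler_addgt0Pr => e e0.
pose N := Num.Def.archi_bound (c / e).
have hN : c / e < N.+1%:R.
  by apply: lt_le_trans (archi_boundP (divr_ge0 c0 (ltW e0))) _; rewrite ler_nat.
apply: (le_trans (h N)); rewrite lerD2l ler_pdivrMr ?ltr0n // mulrC.
by rewrite ltr_pdivrMr // in hN; exact: ltW.
Qed.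

Lemma mul_lt_of_lt_div_succ (a h e : R) : 0 <= a -> 0 <= h ->
  h < e / (a + 1) -> a * h < e.
Proof.
move=> a0 h0 he; have a1 : 0 < a + 1 by rewrite ltr_wpDl.
have : (a + 1) * h < e by rewrite mulrC -ltr_pdivlMr.
nra.
Qed.

Lemma telescope_le a s m n : (forall k, a k.+1 <= a k + s k) -> (m <= n)%N ->
  a n <= a m + \sum_(m <= k < n) s k.
Proof.
move=> h mn; rewrite -lerBlDl -telescope_sumr //.
by apply: ler_sum => k _; have := h k; lra.
Qed.

Lemma is_cvgn_bounded a : cvgn a -> exists M, forall n, `|a n| <= M.
Proof.
move=> /cvg_seq_bounded [M [_ hM]]; exists (`|M| + 1) => n.
apply: (hM (`|M| + 1)) => //.
by rewrite (le_lt_trans (ler_norm M)) // ltrDl.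
Qed.

Lemma is_cvgn_sqrt a : cvgn a -> cvgn (fun n => Num.sqrt (a n)).
Proof.
by move=> ha; apply/cvg_ex; exists (Num.sqrt (limn a)); exact: cvg_comp ha (@sqrt_continuous R _).
Qed.

Lemma cvgn_quasi_fejer a s : (forall k, 0 <= a k) -> (forall k, a k.+1 <= a k + s k) ->
  cvgn (fun n => \sum_(k < n) s k) -> cvgn a.
Proof.
move=> a0 hstep hs; have [M hM] := is_cvgn_bounded hs.
pose b n := a n - \sum_(k < n) s k.
have b_noninc : {homo b : n m / (n <= m)%N >-> m <= n}.
  apply/nonincreasing_seqP => n; rewrite /b big_ord_recr /=.
  by have := hstep n; lra.
have b_low : has_lbound (range b).
  exists (- M) => _ [n _ <-]; have := hM n; have := a0 n.
  by rewrite /b ler_norml => ? /andP[? ?]; lra.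
have -> : a = b + (fun n => \sum_(k < n) s k) by apply/funext => n; rewrite /b /= subrK.
exact: is_cvgD (nonincreasing_is_cvgn b_noninc b_low) hs.
Qed.

Lemma weighted_sum_bounded_small w x (B : R) : (forall k, 0 <= w k) ->
  (forall k, 0 <= x k) -> (fun n => \sum_(k < n) w k) @ \oo --> +oo ->
  (forall n, \sum_(k < n) w k * x k <= B) ->
  forall e, 0 < e -> forall N, exists2 n, (N <= n)%N & x n < e.
Proof.
move=> w0 x0 hw hB e e0 N.
case: (pselect (exists2 n, (N <= n)%N & x n < e)) => // hno; exfalso.
have x_ge n : (N <= n)%N -> e <= x n.
  by move=> Nn; rewrite leNgt; apply/negP => xn; apply: hno; exists n.
have sum_split (F : nat -> R) n : (N <= n)%N ->
    \sum_(k < n) F k = \sum_(k < N) F k + \sum_(N <= k < n) F k.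
  by move=> Nn; have := @big_cat_nat R 0 +%R N 0 n xpredT F (leq0n N) Nn; rewrite !big_mkord.
have grow n : (N <= n)%N -> e * (\sum_(k < n) w k - \sum_(k < N) w k) <= B.
  move=> Nn; apply: le_trans (hB n).
  rewrite (sum_split w _ Nn) addrC addKr (sum_split (fun k => w k * x k) _ Nn) mulr_sumr.
  rewrite -[X in X <= _]add0r lerD //; first by apply: sumr_ge0 => k _; exact: mulr_ge0.
  by apply: ler_sum_nat => k /andP[Nk _]; rewrite mulrC ler_wpM2l // x_ge.
have [N1 _ hN1] := (cvgryPge _).1 hw (\sum_(k < N) w k + B / e + 1).
have := grow _ (leq_maxl N N1); have := hN1 _ (leq_maxr N N1).
move: (\sum_(k < maxn N N1) w k) (\sum_(k < N) w k) => W W0 hW.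
have -> : B = e * (B / e) by rewrite mulrCA divff ?lt0r_neq0 ?mulr1.
rewrite ler_pM2l //; lra.
Qed.

End RealFacts.

Section Euclid.
Variables (R : realType) (d : nat).
Local Notation V := 'rV[R]_d.
Implicit Types (u v w : V).

Lemma dotpC u v : dotp u v = dotp v u.
Proof. by apply: eq_bigr => i _; rewrite mulrC. Qed.

Lemma dotpDl u v w : dotp (u + v) w = dotp u w + dotp v w.
Proof. by rewrite /dotp -big_split; apply: eq_bigr => i _; rewrite !mxE mulrDl. Qed.

Lemma dotpNl u w : dotp (- u) w = - dotp u w.
Proof. by rewrite /dotp -sumrN; apply: eq_bigr => i _; rewrite !mxE mulNr. Qed.

Lemma dotpZl a u w : dotp (a *: u) w = a * dotp u w.
Proof. by rewrite /dotp mulr_sumr; apply: eq_bigr => i _; rewrite !mxE mulrA. Qed.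

Lemma dotpBl u v w : dotp (u - v) w = dotp u w - dotp v w.
Proof. by rewrite dotpDl dotpNl. Qed.

Lemma dotpDr u v w : dotp w (u + v) = dotp w u + dotp w v.
Proof. by rewrite dotpC dotpDl !(dotpC w). Qed.

Lemma dotpNr u w : dotp w (- u) = - dotp w u.
Proof. by rewrite dotpC dotpNl dotpC. Qed.

Lemma dotpZr a u w : dotp w (a *: u) = a * dotp w u.
Proof. by rewrite dotpC dotpZl dotpC. Qed.

Lemma dotpBr u v w : dotp w (u - v) = dotp w u - dotp w v.
Proof. by rewrite dotpDr dotpNr. Qed.

Lemma dotp0l w : dotp 0 w = 0.
Proof. by rewrite -(scale0r 0) dotpZl mul0r. Qed.

Lemma dotpp_ge0 u : 0 <= dotp u u.
Proof. by apply: sumr_ge0 => i _; rewrite -expr2 sqr_ge0. Qed.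

Lemma enorm_ge0 u : 0 <= enorm u.
Proof. exact: sqrtr_ge0. Qed.

Lemma sqr_enorm u : enorm u ^+ 2 = dotp u u.
Proof. by rewrite sqr_sqrtr // dotpp_ge0. Qed.

Lemma enorm_eq0 u : enorm u = 0 -> u = 0.
Proof.
move/eqP; rewrite sqrtr_eq0 => uu_le0.
have uu0 : dotp u u = 0 by apply/eqP; rewrite eq_le uu_le0 dotpp_ge0.
have sq_ge0 j : 0 <= u ord0 j * u ord0 j by rewrite -expr2 sqr_ge0.
have coord0 := psumr_eq0P (fun j _ => sq_ge0 j) uu0.
apply/rowP => i; rewrite mxE; apply/eqP.
by rewrite -[_ == 0]orbb -mulf_eq0 coord0.
Qed.

Lemma enormN u : enorm (- u) = enorm u.
Proof. by rewrite /enorm dotpNl dotpNr opprK. Qed.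

Lemma enormZ a u : enorm (a *: u) = `|a| * enorm u.
Proof. by rewrite /enorm dotpZl dotpZr mulrA -expr2 sqrtrM ?sqr_ge0 // sqrtr_sqr. Qed.

Lemma sqr_enormD u v : enorm (u + v) ^+ 2 = enorm u ^+ 2 + 2 * dotp u v + enorm v ^+ 2.
Proof. rewrite !sqr_enorm dotpDl !dotpDr (dotpC v u); lra. Qed.

Lemma sqr_enormB u v : enorm (u - v) ^+ 2 = enorm u ^+ 2 - 2 * dotp u v + enorm v ^+ 2.
Proof. by rewrite sqr_enormD dotpNr enormN; lra. Qed.

Lemma two_dotp_le u v : 2 * dotp u v <= enorm u ^+ 2 + enorm v ^+ 2.
Proof. have := sqr_ge0 (enorm (u - v)); rewrite sqr_enormB; lra. Qed.

Lemma two_dotp_le_scaled u v s : 0 < s ->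
  2 * dotp u v <= s * enorm u ^+ 2 + enorm v ^+ 2 / s.
Proof.
move=> s0; have := two_dotp_le (s *: u) v.
rewrite dotpZl enormZ ger0_norm ?(ltW s0) // => h.
rewrite -(ler_pM2l s0).
have -> : s * (s * enorm u ^+ 2 + enorm v ^+ 2 / s) = (s * enorm u) ^+ 2 + enorm v ^+ 2.
  by field; exact: lt0r_neq0.
lra.
Qed.

Lemma dotp_le_enormM u v : dotp u v <= enorm u * enorm v.
Proof.
have [u0|nu] := eqVneq (enorm u) 0; first by rewrite u0 mul0r (enorm_eq0 u0) dotp0l.
have [v0|nv] := eqVneq (enorm v) 0.
  by rewrite v0 mulr0 (enorm_eq0 v0) dotpC dotp0l.
have pu : 0 < enorm u by rewrite lt0r nu enorm_ge0.
have pv : 0 < enorm v by rewrite lt0r nv enorm_ge0.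
have := two_dotp_le_scaled u v (divr_gt0 pv pu).
have -> : enorm v / enorm u * enorm u ^+ 2 + enorm v ^+ 2 / (enorm v / enorm u)
          = 2 * (enorm u * enorm v) by field; apply/andP.
lra.
Qed.

Lemma abs_dotp_le u v : `|dotp u v| <= enorm u * enorm v.
Proof.
rewrite ler_norml dotp_le_enormM andbT.
have := dotp_le_enormM (- u) v; rewrite dotpNl enormN; lra.
Qed.

Lemma abs_coord_le u i : `|u ord0 i| <= enorm u ^+ 2 + 1.
Proof.
rewrite sqr_enorm /dotp (bigD1 i) //=.
have : 0 <= \sum_(j < d | j != i) u ord0 j * u ord0 j.
  by apply: sumr_ge0 => j _; rewrite -expr2 sqr_ge0.
have : `|u ord0 i| <= u ord0 i * u ord0 i + 1.
  case: (lerP `|u ord0 i| 1) => h; first by rewrite -expr2 ler_wpDl ?sqr_ge0.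
  by rewrite -expr2 -real_normK ?num_real // ler_wpDr // expr2 ler_peMl // ltW.
lra.
Qed.

Lemma sqr_enorm_le_coord u (B : R) :
  (forall i, `|u ord0 i| <= B) -> enorm u ^+ 2 <= d%:R * B ^+ 2.
Proof.
move=> hB; rewrite sqr_enorm /dotp.
have -> : d%:R * B ^+ 2 = \sum_(i < d) B ^+ 2 by rewrite sumr_const card_ord mulr_natl.
apply: ler_sum => i _; rewrite -expr2 -real_normK ?num_real //.
by rewrite ler_sqr ?nnegrE // (le_trans _ (hB i)).
Qed.

Definition cluster_point (u : nat -> V) (p : V) : Prop :=
  forall e, 0 < e -> forall N, exists2 n, (N <= n)%N & enorm (u n - p) < e.

Lemma bounded_cluster_point (u : nat -> V) c (B : R) :
  (forall n, enorm (u n - c) ^+ 2 <= B) -> exists p, cluster_point u p.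
Proof.
move=> hB; pose M := B + 1; pose w n := u n - c.
pose A := [set v : V | forall i, (`[(- M), M]%classic : set R) (v ord0 i)].
have cA : compact A.
  by apply: (@rV_compact _ _ (fun=> `[(- M), M]%classic)) => _; exact: segment_compact.
have FA : (w @ \oo) A.
  exists 0%N => // n _ i /=; rewrite in_itv /= -ler_norml.
  by apply: (le_trans (abs_coord_le (w n) i)); rewrite /M lerD2r; exact: hB.
have [p [_ cp]] := cA _ _ FA.
exists (c + p) => e e0 N.
pose e' := e / (d%:R + 1).
have e'0 : 0 < e' by rewrite divr_gt0 // ltr_wpDl.
have FN : (w @ \oo) [set v | exists2 n, (N <= n)%N & w n = v] by exists N => // n /= Nn; exists n.
have [_ [[n Nn <-] /= [_ /(_ ord0) close]]] := cp _ _ FN (nbhsx_ballx p e' e'0).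
exists n => //.
have hc i : `|(w n - p) ord0 i| <= e'.
  by move: (close i); rewrite /ball /= !mxE distrC => /ltW.
have small : d%:R * e' ^+ 2 < e ^+ 2.
  have -> : e = e' * (d%:R + 1) by rewrite /e' divfK // lt0r_neq0 // ltr_wpDl.
  have : 0 <= d%:R :> R by []; nra.
rewrite opprD addrA -ltr_sqr ?nnegrE ?enorm_ge0 ?(ltW e0) //.
exact: le_lt_trans (sqr_enorm_le_coord hc) small.
Qed.

Lemma cluster_point_subseq (u : nat -> V) (phi : nat -> nat) p :
  (forall k, (k <= phi k)%N) -> cluster_point (u \o phi) p -> cluster_point u p.
Proof.
move=> phik hc e e0 N; have [k Nk hk] := hc e e0 N.
by exists (phi k) => //; exact: leq_trans Nk (phik k).
Qed.

Lemma cvgn_dist_cluster_point (u : nat -> V) p :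
  cvgn (fun n => enorm (u n - p)) -> cluster_point u p ->
  (fun n => enorm (u n - p)) @ \oo --> 0.
Proof.
move=> hcvg hcl; suff <- : limn (fun n => enorm (u n - p)) = 0 by [].
apply/eqP; rewrite eq_le; apply/andP; split; last first.
  by apply: limr_ge => //; apply: nearW => n; exact: enorm_ge0.
rewrite leNgt; apply/negP => lpos.
have [N _ hN] := cvgr_dist_lt _ _ hcvg _ (divr_gt0 lpos (ltr0n R 2)).
have [n Nn hn] := hcl _ (divr_gt0 lpos (ltr0n R 2)) N.
have := hN n Nn; rewrite ltr_norml => /andP[_ h2].
by move: h2 hn; move: (limn _) => l; lra.
Qed.

End Euclid.

Section Semicontinuity.
Variables (R : realType) (d : nat).
Local Notation V := 'rV[R]_d.

Definition lsc_at (psi : V -> \bar R) (p : V) : Prop :=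
  forall a : R, (a%:E < psi p)%E ->
    exists2 δ : R, 0 < δ & forall z, enorm (z - p) < δ -> (a%:E < psi z)%E.

Lemma no_minfty_cases (g : V -> \bar R) x :
  no_minfty g -> g x = +oo%E \/ exists r, g x = r%:E.
Proof. by move/(_ x); case: (g x) => [r| |] _ //; [right; exists r | left]. Qed.

Lemma sqr_dist_lsc_at (c : R) x p : 0 <= c ->
  lsc_at (fun z => (c * enorm (z - x) ^+ 2)%:E) p.
Proof.
move=> c0 a; rewrite lte_fin => ha.
have e0 : 0 < c * enorm (p - x) ^+ 2 - a by rewrite subr_gt0.
set e := c * enorm (p - x) ^+ 2 - a; set b := 2 * c * enorm (p - x).
have b0 : 0 <= b by rewrite !mulr_ge0 // enorm_ge0.
exists (e / (b + 1)); first by rewrite divr_gt0 // ltr_wpDl.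
move=> y hy; rewrite lte_fin.
have lb : enorm (p - x) ^+ 2 - 2 * (enorm (p - x) * enorm (y - p)) <= enorm (y - x) ^+ 2.
  have -> : y - x = (p - x) + (y - p) by apply/matrixP => i j; rewrite !mxE; ring.
  rewrite [enorm (p - x + _) ^+ 2]sqr_enormD.
  have := abs_dotp_le (p - x) (y - p); rewrite ler_norml => /andP[h _].
  have := sqr_ge0 (enorm (y - p)); lra.
have := ler_wpM2l c0 lb; have := mul_lt_of_lt_div_succ b0 (enorm_ge0 _) hy.
rewrite /b /e; nra.
Qed.

Lemma lsc_atD (psi : V -> \bar R) (phi : V -> R) p : no_minfty psi ->
  lsc_at psi p -> lsc_at (fun z => (phi z)%:E) p ->
  lsc_at (fun z => psi z + (phi z)%:E)%E p.
Proof.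
move=> hm hpsi hphi a ha.
have [b [e [e0 hb hab]]] : exists b e, [/\ 0 < e, (b%:E < psi p)%E & a <= b + phi p - e].
  case: (no_minfty_cases p hm) => [pinf|[r pr]]; rewrite ?pinf ?pr in ha *.
    by exists (a - phi p + 1), 1; split => //; [rewrite ltry | lra].
  rewrite -EFinD lte_fin in ha.
  exists (r - (r + phi p - a) / 2), ((r + phi p - a) / 2); rewrite lte_fin.
  by split; [rewrite divr_gt0 // subr_gt0 | lra | lra].
have [δ1 δ10 h1] := hpsi b hb.
have phie : ((phi p - e)%:E < (phi p)%:E)%E by rewrite lte_fin; lra.
have [δ2 δ20 h2] := hphi (phi p - e) phie.
exists (Num.min δ1 δ2); first by rewrite lt_min δ10.
move=> z; rewrite lt_min => /andP[z1 z2].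
have := h2 z z2; rewrite lte_fin => hphiz.
have := h1 z z1.
case: (no_minfty_cases z hm) => [->|[s ->]] hpsiz; first by rewrite addye // ltry.
by rewrite lte_fin in hpsiz; rewrite -EFinD lte_fin; lra.
Qed.

Lemma lsc_at_cluster_le (psi : V -> \bar R) (u : nat -> V) p (m : R) :
  lsc_at psi p -> cluster_point u p ->
  (forall n, (psi (u n) <= (m + n.+1%:R^-1)%:E)%E) -> (psi p <= m%:E)%E.
Proof.
move=> hl hc hu; rewrite leNgt; apply/negP => hlt.
have [a [ma ha]] : exists a, m < a /\ (a%:E < psi p)%E.
  move: hlt; case: (psi p) => [r| |] h //.
    by rewrite lte_fin in h; exists ((m + r) / 2); rewrite lte_fin; split; lra.
  by exists (m + 1); split; [lra | rewrite ltry].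
have [δ δ0 hδ] := hl a ha.
have am0 : 0 < a - m by rewrite subr_gt0.
pose N := Num.Def.archi_bound (a - m)^-1.
have hN : (a - m)^-1 < N%:R by apply: archi_boundP; rewrite invr_ge0 ltW.
have [n Nn hun] := hc δ δ0 N.
have := lt_le_trans (hδ _ hun) (hu n); rewrite lte_fin.
have : n.+1%:R^-1 <= N.+1%:R^-1 :> R by rewrite lef_pV2 ?posrE ?ltr0n // ler_nat ltnS.
have : N.+1%:R^-1 < a - m.
  rewrite -[X in _ < X](invrK (a - m)) ltf_pV2 ?posrE ?invr_gt0 ?ltr0n //.
  by apply: (lt_le_trans hN); rewrite ler_nat.
move: (N.+1%:R^-1 : R) (n.+1%:R^-1 : R) => x1 x2; lra.
Qed.

Lemma lsc_coercive_has_min (psi : V -> \bar R) y (c k : R) : 0 < k ->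
  (forall p, lsc_at psi p) -> (exists v, psi v != +oo%E) ->
  (forall v, ((c + k * enorm (v - y) ^+ 2)%:E <= psi v)%E) ->
  exists p, forall v, (psi p <= psi v)%E.
Proof.
move=> k0 hlsc [v0 hv0] hlow.
have psi_fin v : psi v != +oo%E -> exists r, psi v = r%:E.
  by have := hlow v; case: (psi v) => [r| |] //; exists r.
pose S := [set r : R | exists v, psi v = r%:E].
have lowS : lbound S c.
  move=> r [v hv]; have := hlow v; rewrite hv lee_fin => /(le_trans _); apply.
  by rewrite lerDl mulr_ge0 ?sqr_ge0 // ltW.
have hS : has_inf S.
  split; last by exists c.
  by have [r0 hr0] := psi_fin v0 hv0; exists r0, v0.
pose m := inf S.
have m_le v : (m%:E <= psi v)%E.
  have [/eqP->|/psi_fin[r hr]] := boolP (psi v == +oo%E); first by rewrite leey.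
  by rewrite hr lee_fin; apply: ge_inf; [case: hS | exists v].
have near_inf n : exists v, (psi v <= (m + n.+1%:R^-1)%:E)%E.
  have e0 : 0 < n.+1%:R^-1 :> R by rewrite invr_gt0 ltr0n.
  have [r [v hv] hr] := inf_adherent e0 hS.
  by exists v; rewrite hv lee_fin ltW.
have [vs hvs] := choice near_inf.
have bounded n : enorm (vs n - y) ^+ 2 <= (m + 1 - c) / k.
  rewrite ler_pdivlMr // mulrC.
  have := le_trans (hlow (vs n)) (hvs n); rewrite lee_fin.
  have : n.+1%:R^-1 <= 1 :> R by rewrite invf_le1 ?ltr0n // ler1n.
  move: (n.+1%:R^-1 : R) => x; lra.
have [p clp] := bounded_cluster_point bounded.
by exists p => v; apply: le_trans (m_le v); exact: lsc_at_cluster_le (hlsc p) clp hvs.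
Qed.

End Semicontinuity.

Section Smooth.
Variables (R : realType) (d : nat).
Local Notation V := 'rV[R]_d.
Variables (f : V -> R) (gradf : V -> V).
Hypothesis hgrad : is_gradient f gradf.

Lemma gradient_dir_approx x w e : 0 < e ->
  exists t, [/\ 0 < t, t < 1 & `|f (x + t *: w) - f x - t * dotp (gradf x) w| <= t * e].
Proof.
move=> e0; set c := enorm w + 1.
have c0 : 0 < c by rewrite ltr_wpDl // enorm_ge0.
have [δ δ0 hδ] := hgrad x (divr_gt0 e0 c0).
pose t := Num.min (2^-1) (δ / (2 * c)).
have t0 : 0 < t by rewrite lt_min invr_gt0 ltr0n divr_gt0 // mulr_gt0.
have t1 : t < 1 by rewrite gt_min invf_lt1 ?ltr0n // ltr1n.
have tδ : t * (2 * c) <= δ by rewrite -ler_pdivlMr ?mulr_gt0 // ge_min lexx orbT.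
have htw : enorm (t *: w) < δ.
  rewrite enormZ (ger0_norm (ltW t0)).
  have : t * enorm w < t * (2 * c) by rewrite ltr_pM2l // /c; have := enorm_ge0 w; lra.
  lra.
exists t; split => //.
have := hδ _ htw; rewrite dotpZr enormZ (ger0_norm (ltW t0)) => /le_trans; apply.
have q0 : 0 < e / c by rewrite divr_gt0.
have hw : enorm w <= c by rewrite /c lerDl.
apply: (@le_trans _ _ (e / c * (t * c))); first by rewrite !ler_pM2l.
by rewrite mulrCA divfK ?lt0r_neq0.
Qed.

Lemma dotp_gradient_ge x w A :
  (forall t, 0 < t < 1 -> t * A <= f (x + t *: w) - f x) -> A <= dotp (gradf x) w.
Proof.
move=> H; apply/ler_addgt0Pr => e e0.
have [t [t0 t1 h]] := gradient_dir_approx x w e0.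
have := H t; rewrite t0 t1 => /(_ isT) h3.
move: h; rewrite ler_norml => /andP[_ h2].
have : t * A <= t * (dotp (gradf x) w + e) by lra.
by rewrite ler_pM2l.
Qed.

Lemma dotp_gradient_le x w A :
  (forall t, 0 < t < 1 -> f (x + t *: w) - f x <= t * A) -> dotp (gradf x) w <= A.
Proof.
move=> H; apply/ler_addgt0Pr => e e0.
have [t [t0 t1 h]] := gradient_dir_approx x w e0.
have := H t; rewrite t0 t1 => /(_ isT) h3.
move: h; rewrite ler_norml => /andP[h2 _].
have : t * dotp (gradf x) w <= t * (A + e) by lra.
by rewrite ler_pM2l.
Qed.

Lemma gradient_lsc_at p : lsc_at (fun z => (f z)%:E) p.
Proof.
move=> a; rewrite lte_fin => ap.
have [δ1 δ10 h1] := hgrad p ltr01.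
set b := enorm (gradf p) + 1.
have b0 : 0 <= b by rewrite addr_ge0 // enorm_ge0.
exists (Num.min δ1 ((f p - a) / (b + 1))).
  by rewrite lt_min δ10 divr_gt0 ?subr_gt0 // ltr_wpDl.
move=> y; rewrite lt_min => /andP[hy1 hy2]; rewrite lte_fin.
have := h1 _ hy1; rewrite [p + _]addrC subrK mul1r ler_norml => /andP[h3 _].
have := abs_dotp_le (gradf p) (y - p); rewrite ler_norml => /andP[h4 _].
have := mul_lt_of_lt_div_succ b0 (enorm_ge0 _) hy2.
rewrite /b; lra.
Qed.

Hypothesis hconv : convex_real f.

Lemma segment_pointE (x y : V) (t : R) : x + t *: (y - x) = t *: y + (1 - t) *: x.
Proof. by apply/matrixP => i j; rewrite !mxE; ring. Qed.

Lemma convex_gradient_ineq x y : f x + dotp (gradf x) (y - x) <= f y.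
Proof.
rewrite -lerBrDl; apply: dotp_gradient_le => t /andP[t0 t1].
rewrite segment_pointE; have := @hconv y x t; rewrite t0 t1 => /(_ isT); lra.
Qed.

Variable L : R.
Hypotheses (hlip : lipschitz_with L gradf) (L0 : 0 <= L).

(* Only pointwise differentiability is available, so the descent lemma comes from a
   Riemann sum along a uniform partition of the segment [x, x + w]. *)
Lemma descent_partial_sum x w (K : R) (n : nat) : 0 < K ->
  f (x + (n%:R / K) *: w) - f x <= n%:R / K * dotp (gradf x) w
                                  + L * enorm w ^+ 2 * (n%:R * (n%:R + 1)) / (2 * K ^+ 2).
Proof.
move=> K0; have Kn0 : K != 0 by exact: lt0r_neq0.
pose z (k : nat) := x + (k%:R / K) *: w.
elim: n => [|n IH]; first by rewrite mul0r scale0r addr0 subrr !mul0r add0r mulr0 mul0r.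
rewrite -/(z n) in IH; rewrite -/(z n.+1).
have hz : z n - z n.+1 = - (K^-1 *: w).
  by apply/matrixP => i j; rewrite !mxE -natr1; field.
have step : f (z n.+1) - f (z n) <= dotp (gradf (z n.+1)) w / K.
  have := convex_gradient_ineq (z n.+1) (z n); rewrite hz dotpNr dotpZr mulrC; lra.
have lip : dotp (gradf (z n.+1) - gradf x) w <= L * ((n%:R + 1) / K * enorm w) * enorm w.
  apply: le_trans (dotp_le_enormM _ _) _; apply: ler_wpM2r; first exact: enorm_ge0.
  apply: le_trans (hlip _ _) _; apply: ler_wpM2l => //.
  by rewrite natr1 /z [x + _]addrC addrK enormZ ger0_norm // divr_ge0 // ltW.
rewrite dotpBl in lip.
have : dotp (gradf (z n.+1)) w / K
       <= dotp (gradf x) w / K + L * ((n%:R + 1) / K * enorm w) * enorm w / K.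
  by rewrite -mulrDl ler_pM2r ?invr_gt0 //; lra.
rewrite -natr1; set D := dotp (gradf x) w in IH *; set nw := enorm w in IH *.
have -> : (n%:R + 1) / K * D + L * nw ^+ 2 * ((n%:R + 1) * (n%:R + 1 + 1)) / (2 * K ^+ 2)
        = n%:R / K * D + L * nw ^+ 2 * (n%:R * (n%:R + 1)) / (2 * K ^+ 2)
          + (D / K + L * ((n%:R + 1) / K * nw) * nw / K) by field.
lra.
Qed.

Lemma descent_lemma x y :
  f y <= f x + dotp (gradf x) (y - x) + L / 2 * enorm (y - x) ^+ 2.
Proof.
set w := y - x; have -> : y = x + w by rewrite /w addrC subrK.
apply: (@ler_add_divSn _ _ _ (L / 2 * enorm w ^+ 2)) => [|N].
  by rewrite mulr_ge0 ?sqr_ge0 // divr_ge0.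
have K0 : 0 < N.+1%:R :> R by rewrite ltr0n.
have := descent_partial_sum x w N.+1 K0.
rewrite divff ?lt0r_neq0 // scale1r mul1r.
have -> : L * enorm w ^+ 2 * (N.+1%:R * (N.+1%:R + 1)) / (2 * N.+1%:R ^+ 2)
        = L / 2 * enorm w ^+ 2 + L / 2 * enorm w ^+ 2 / N.+1%:R.
  by field; rewrite lt0r_neq0.
move: (L / 2 * _ / _) => err; lra.
Qed.

End Smooth.

Section Prox.
Variables (R : realType) (d : nat).
Local Notation V := 'rV[R]_d.
Variable g : V -> \bar R.
Hypotheses (hm : no_minfty g) (hp : proper_fun g).

Lemma argmin_fin_num (f : V -> R) x : argmin_set (Fsum f g) x -> exists r, g x = r%:E.
Proof.
move=> hx; have [v0 hv0] := hp.
case: (no_minfty_cases v0 hm) => [h|[r0 h0]]; first by rewrite h in hv0.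
case: (no_minfty_cases x hm) => [h|//].
by have := hx v0; rewrite /Fsum h h0 -EFinD addey // leNgt ltry.
Qed.

Hypothesis hc : convex_ext g.

Lemma prox_variational_ineq γ y p : 0 < γ -> is_prox g γ y p ->
  exists gp, g p = gp%:E /\
    forall v r, g v = r%:E -> γ * gp + dotp (y - p) (v - p) <= γ * r.
Proof.
move=> γ0 hpr.
have [gp gpE] : exists gp, g p = gp%:E.
  have [v0 hv0] := hp.
  case: (no_minfty_cases v0 hm) => [h|[r0 h0]]; first by rewrite h in hv0.
  case: (no_minfty_cases p hm) => [h|//].
  by have := hpr v0; rewrite h h0 -EFinD addye // leNgt ltry.
exists gp; split => // v r gv.
suff h : gp + dotp (y - p) (v - p) / γ <= r.
  by rewrite -(ler_pM2l γ0) mulrDr [γ * (_ / γ)]mulrCA divff ?lt0r_neq0 // mulr1 in h.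
set D := dotp (p - y) (v - p); set c := enorm (v - p) ^+ 2 / (2 * γ).
have g2 : 0 < 2 * γ by rewrite mulr_gt0.
have along t : 0 < t < 1 -> gp <= r + D / γ + t * c.
  case/andP=> t0 t1.
  have := @hc v p t; rewrite t0 t1 gv gpE -!EFinM -EFinD => /(_ isT) hw.
  case: (no_minfty_cases (t *: v + (1 - t) *: p) hm) => [h|[gw gwE]].
    by rewrite h leNgt ltry in hw.
  rewrite gwE lee_fin in hw.
  have := hpr (t *: v + (1 - t) *: p); rewrite gpE gwE -!EFinD lee_fin.
  have -> : t *: v + (1 - t) *: p - y = (p - y) + t *: (v - p).
    by apply/matrixP => i j; rewrite !mxE; ring.
  rewrite [enorm (p - y + _) ^+ 2]sqr_enormD dotpZr enormZ ger0_norm ?(ltW t0) // -/D.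
  have -> : (enorm (p - y) ^+ 2 + 2 * (t * D) + (t * enorm (v - p)) ^+ 2) / (2 * γ)
          = enorm (p - y) ^+ 2 / (2 * γ) + t * (D / γ + t * c).
    by rewrite /c; field; exact: lt0r_neq0.
  move=> hmin; rewrite -(ler_pM2l t0) !mulrDr; lra.
apply: (@ler_add_divSn _ _ _ c) => [|N]; first by rewrite divr_ge0 ?sqr_ge0 // ltW.
have t01 : 0 < (N.+2%:R : R)^-1 < 1 by rewrite invr_gt0 ltr0n invf_lt1 ?ltr0n // ltr1n.
have := along _ t01.
have : N.+2%:R^-1 * c <= c / N.+1%:R.
  rewrite mulrC ler_wpM2l ?divr_ge0 ?sqr_ge0 ?(ltW g2) //.
  by rewrite lef_pV2 ?posrE ?ltr0n // ler_nat.
have -> : y - p = - (p - y) by rewrite opprB.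
rewrite dotpNl -/D mulNr.
move: (D / γ) (N.+2%:R^-1 * c) (c / N.+1%:R) => a1 a2 a3; lra.
Qed.

Hypothesis hl : lsc_ext g.
Variables (f : V -> R) (gradf : V -> V).
Hypothesis hgrad : is_gradient f gradf.

Lemma argmin_subgradient xs gs v r : argmin_set (Fsum f g) xs ->
  g xs = gs%:E -> g v = r%:E -> gs - dotp (gradf xs) (v - xs) <= r.
Proof.
move=> hxs gsE gv.
suff : gs - r <= dotp (gradf xs) (v - xs) by lra.
apply: (dotp_gradient_ge hgrad) => t /andP[t0 t1]; rewrite segment_pointE.
have := @hc v xs t; rewrite t0 t1 gv gsE -!EFinM -EFinD => /(_ isT) hw.
have := hxs (t *: v + (1 - t) *: xs); rewrite /Fsum gsE.
case: (no_minfty_cases (t *: v + (1 - t) *: xs) hm) => [h|[gw gwE]].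
  by rewrite h leNgt ltry in hw.
rewrite gwE -!EFinD lee_fin; rewrite gwE lee_fin in hw; lra.
Qed.

Hypothesis hargmin : exists x, argmin_set (Fsum f g) x.

(* the affine minorant of [g] given by [argmin_subgradient] makes the prox objective coercive *)
Lemma prox_exists γ y : 0 < γ -> exists p, is_prox g γ y p.
Proof.
move=> γ0; have [xs hxs] := hargmin; have [gs gsE] := argmin_fin_num hxs.
have g2 : 0 < 2 * γ by rewrite mulr_gt0.
have k0 : 0 < (4 * γ)^-1 by rewrite invr_gt0 mulr_gt0.
pose psi z := (g z + ((2 * γ)^-1 * enorm (z - y) ^+ 2)%:E)%E.
pose c := gs - dotp (gradf xs) (y - xs) - γ * enorm (gradf xs) ^+ 2.
have lsc_psi p : lsc_at psi p.
  by apply: lsc_atD => //; [exact: hl | apply: sqr_dist_lsc_at; rewrite invr_ge0 ltW].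
have proper_psi : exists v, psi v != +oo%E.
  have [v0 hv0] := hp; case: (no_minfty_cases v0 hm) => [h|[r0 h0]]; first by rewrite h in hv0.
  by exists v0; rewrite /psi h0 -EFinD.
have low v : ((c + (4 * γ)^-1 * enorm (v - y) ^+ 2)%:E <= psi v)%E.
  case: (no_minfty_cases v hm) => [h|[r hr]]; first by rewrite /psi h addye // leey.
  rewrite /psi hr -EFinD lee_fin.
  have := argmin_subgradient hxs gsE hr.
  have -> : v - xs = (v - y) + (y - xs) by apply/matrixP => i j; rewrite !mxE; ring.
  rewrite dotpDr => sub.
  have := two_dotp_le_scaled (gradf xs) (v - y) g2.
  have -> : enorm (v - y) ^+ 2 / (2 * γ) = 2 * ((4 * γ)^-1 * enorm (v - y) ^+ 2).
    by field; exact: lt0r_neq0.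
  have -> : (2 * γ)^-1 * enorm (v - y) ^+ 2 = 2 * ((4 * γ)^-1 * enorm (v - y) ^+ 2).
    by field; exact: lt0r_neq0.
  rewrite /c; move: ((4 * γ)^-1 * _) => q; lra.
have [p pmin] := lsc_coercive_has_min k0 lsc_psi proper_psi low.
by exists p => v; have := pmin v; rewrite /psi ![(2 * γ)^-1 * _]mulrC.
Qed.

Lemma prox_spec γ y : 0 < γ -> is_prox g γ y (prox g γ y).
Proof. by move=> γ0; apply: xgetPex; exact: prox_exists. Qed.

End Prox.

Section ForwardBackwardStep.
Variables (R : realType) (d : nat).
Local Notation V := 'rV[R]_d.
Variables (f : V -> R) (gradf : V -> V) (g : V -> \bar R) (L : R).
Hypotheses (hm : no_minfty g) (hp : proper_fun g) (hc : convex_ext g) (hl : lsc_ext g).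
Hypotheses (hgrad : is_gradient f gradf) (hL : 0 < L) (hlip : lipschitz_with L gradf).
Hypotheses (hconv : convex_real f) (hargmin : exists x, argmin_set (Fsum f g) x).

(* [p] is the inexact step from [x] along [Hx] and [T] the exact one; the variational
   inequalities of both are combined with the descent lemma, and [γ L <= 1] absorbs the
   curvature term. *)
Lemma forward_backward_three_point x Hx γ ts p T gp gT gs : 0 < γ -> γ * L <= 1 ->
  g p = gp%:E -> g T = gT%:E -> g ts = gs%:E ->
  (forall v r, g v = r%:E -> γ * gp + dotp (x - γ *: Hx - p) (v - p) <= γ * r) ->
  (forall v r, g v = r%:E -> γ * gT + dotp (x - γ *: gradf x - T) (v - T) <= γ * r) ->
  enorm (p - ts) ^+ 2 <= enorm (x - ts) ^+ 2 - 2 * γ * dotp (T - ts) (Hx - gradf x)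
    + 2 * γ ^+ 2 * enorm (Hx - gradf x) ^+ 2 - 2 * γ * (f p + gp - (f ts + gs)).
Proof.
move=> γ0 γL' gpE gTE gsE vip viT.
have vi1 := vip ts gs gsE; have vi2 := vip T gT gTE; have vi3 := viT p gp gpE.
have DL := descent_lemma hgrad hconv hlip (ltW hL) x p.
have GI := convex_gradient_ineq hgrad hconv x ts.
have e1 : x - γ *: Hx - p = (x - ts) - (p - ts) - γ *: gradf x - γ *: (Hx - gradf x).
  by apply/matrixP => i j; rewrite !mxE; ring.
have e2 : x - γ *: gradf x - T = (x - ts) - (T - ts) - γ *: gradf x.
  by apply/matrixP => i j; rewrite !mxE; ring.
have e3 : T - p = (T - ts) - (p - ts) by apply/matrixP => i j; rewrite !mxE; ring.
have e4 : p - T = (p - ts) - (T - ts) by apply/matrixP => i j; rewrite !mxE; ring.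
have e5 : p - x = (p - ts) - (x - ts) by apply/matrixP => i j; rewrite !mxE; ring.
have e6 : ts - p = - (p - ts) by rewrite opprB.
have e7 : ts - x = - (x - ts) by rewrite opprB.
rewrite e1 e6 in vi1; rewrite e1 e3 in vi2; rewrite e2 e4 in vi3.
rewrite e5 sqr_enormB in DL; rewrite e7 in GI.
have pol := two_dotp_le (γ *: (Hx - gradf x)) ((T - ts) - (p - ts)).
rewrite sqr_enormB enormZ dotpZl in pol.
move: vi1 vi2 vi3 DL GI pol.
move: (x - ts) (p - ts) (T - ts) (gradf x) (Hx - gradf x) => a b c gx e.
rewrite !(dotpDl, dotpDr, dotpNl, dotpNr, dotpZl, dotpZr, dotpBl, dotpBr) -!sqr_enorm.
rewrite (dotpC c b) (dotpC b a) (dotpC c e) ger0_norm ?(ltW γ0) //.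
move=> vi1 vi2 vi3 DL GI pol.
have g2 : 0 < 2 * γ by rewrite mulr_gt0.
have DLm := ler_wpM2l (ltW g2) DL.
have GIm := ler_wpM2l (ltW g2) GI.
have hN : 0 <= (1 - γ * L) * (enorm b ^+ 2 - 2 * dotp a b + enorm a ^+ 2).
  apply: mulr_ge0; first by lra.
  by have := sqr_ge0 (enorm (b - a)); rewrite sqr_enormB dotpC; lra.
nra.
Qed.

Lemma prox_grad_step x Hx γ ts Fs : 0 < γ -> γ <= 1 / L ->
  argmin_set (Fsum f g) ts -> Fsum f g ts = Fs%:E ->
  exists gap, [/\ 0 <= gap, Fsum f g (prox g γ (x - γ *: Hx)) = (Fs + gap)%:E &
    enorm (prox g γ (x - γ *: Hx) - ts) ^+ 2 <= enorm (x - ts) ^+ 2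
      - 2 * γ * dotp (Tmap g gradf γ x - ts) (Hx - gradf x)
      + 2 * γ ^+ 2 * enorm (Hx - gradf x) ^+ 2 - 2 * γ * gap].
Proof.
move=> γ0 γL hts hFs; rewrite /Tmap.
set p := prox g γ (x - γ *: Hx); set T := prox g γ (x - γ *: gradf x).
have hpp : is_prox g γ (x - γ *: Hx) p := prox_spec hm hp hc hl hgrad hargmin _ γ0.
have hpT : is_prox g γ (x - γ *: gradf x) T := prox_spec hm hp hc hl hgrad hargmin _ γ0.
have [gp [gpE vip]] := prox_variational_ineq hm hp hc γ0 hpp.
have [gT [gTE viT]] := prox_variational_ineq hm hp hc γ0 hpT.
have [gs gsE] := argmin_fin_num hm hp hts.
have FsE : Fs = f ts + gs by move: hFs; rewrite /Fsum gsE -EFinD => -[].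
exists (f p + gp - Fs); split.
- by rewrite FsE subr_ge0; have := hts p; rewrite /Fsum gpE gsE -!EFinD lee_fin.
- by rewrite /Fsum gpE -EFinD; congr EFin; ring.
- have γL' : γ * L <= 1 by rewrite -ler_pdivlMr // mul1r -div1r.
  by rewrite FsE; exact: forward_backward_three_point γ0 γL' gpE gTE gsE vip viT.
Qed.

End ForwardBackwardStep.

Section ForwardBackwardIterates.
Variables (R : realType) (d : nat).
Local Notation V := 'rV[R]_d.
Variables (f : V -> R) (gradf : V -> V) (g : V -> \bar R) (L : R).
Hypotheses (hm : no_minfty g) (hp : proper_fun g) (hc : convex_ext g) (hl : lsc_ext g).
Hypotheses (hgrad : is_gradient f gradf) (hL : 0 < L) (hlip : lipschitz_with L gradf).
Hypotheses (hconv : convex_real f) (hargmin : exists x, argmin_set (Fsum f g) x).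
Variables (gam : nat -> R) (theta H : nat -> V).
Hypotheses (hgam_pos : forall n, (1 <= n)%N -> 0 < gam n)
  (hgam_le : forall n, (1 <= n)%N -> gam n <= 1 / L)
  (hrec : forall n, theta n.+1 = prox g (gam n.+1) (theta n - gam n.+1 *: H n.+1)).

Let eta k := H k.+1 - gradf (theta k).
Let T k := Tmap g gradf (gam k.+1) (theta k).

Variable ts : V.
Hypothesis hts : argmin_set (Fsum f g) ts.

Let Fs := fine (Fsum f g ts).
Let gap k := fine (Fsum f g (theta k.+1)) - Fs.
Let err k := 2 * (gam k.+1 ^+ 2 * enorm (eta k) ^+ 2) - 2 * (gam k.+1 * dotp (T k - ts) (eta k)).

Let FsE : Fsum f g ts = Fs%:E.
Proof. by have [gs gsE] := argmin_fin_num hm hp hts; rewrite /Fs /Fsum gsE -EFinD. Qed.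

Lemma iterate_step k : [/\ 0 <= gap k, Fsum f g (theta k.+1) = (Fs + gap k)%:E &
  enorm (theta k.+1 - ts) ^+ 2 <= enorm (theta k - ts) ^+ 2 + err k - 2 * gam k.+1 * gap k].
Proof.
have [gp [gp0 Fgap step]] := prox_grad_step hm hp hc hl hgrad hL hlip hconv hargmin
  (theta k) (H k.+1) (@hgam_pos k.+1 isT) (@hgam_le k.+1 isT) hts FsE.
rewrite -hrec in Fgap step.
have -> : gap k = gp by rewrite /gap Fgap /= addrC addKr.
by split => //; rewrite /err /eta /T; lra.
Qed.

Lemma iterate_fejer k : enorm (theta k.+1 - ts) ^+ 2 <= enorm (theta k - ts) ^+ 2 + err k.
Proof.
have [gap0 _ step] := iterate_step k.
have := mulr_ge0 (mulr_ge0 (ler0n R 2) (ltW (@hgam_pos k.+1 isT))) gap0; lra.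
Qed.

Lemma iterate_dist_bound m n : (m <= n)%N ->
  enorm (theta n.+1 - ts) ^+ 2 <=
    enorm (theta m - ts) ^+ 2
    - 2 * (\sum_(m <= k < n.+1) gam k.+1 * dotp (T k - ts) (eta k))
    + 2 * (\sum_(m <= k < n.+1) gam k.+1 ^+ 2 * enorm (eta k) ^+ 2).
Proof.
move=> mn.
have := telescope_le (a := fun k => enorm (theta k - ts) ^+ 2) iterate_fejer (leqW mn).
rewrite /err big_split /= sumrN -!mulr_sumr; lra.
Qed.

Hypotheses (hsum_dot : cvgn (fun n => \sum_(k < n) gam k.+1 * dotp (T k - ts) (eta k)))
  (hsum_eta : cvgn (fun n => \sum_(k < n) gam k.+1 ^+ 2 * enorm (eta k) ^+ 2)).

Let err_cvg : cvgn (fun n => \sum_(k < n) err k).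
Proof.
have -> : (fun n => \sum_(k < n) err k) =
    2 *: (fun n => \sum_(k < n) gam k.+1 ^+ 2 * enorm (eta k) ^+ 2)
    - 2 *: (fun n => \sum_(k < n) gam k.+1 * dotp (T k - ts) (eta k)).
  by apply/funext => n; rewrite /err big_split /= sumrN -!mulr_sumr.
by apply: is_cvgB; apply: is_cvgZ => //; exact: is_cvg_cst.
Qed.

Let dist2_cvg : cvgn (fun n => enorm (theta n - ts) ^+ 2).
Proof. exact: cvgn_quasi_fejer (fun k => sqr_ge0 _) iterate_fejer err_cvg. Qed.

Lemma iterate_dist_cvg : cvgn (fun n => enorm (theta n - ts)).
Proof.
have -> : (fun n => enorm (theta n - ts)) = (fun n => Num.sqrt (enorm (theta n - ts) ^+ 2)).
  by apply/funext => n; rewrite sqrtr_sqr ger0_norm // enorm_ge0.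
exact: is_cvgn_sqrt dist2_cvg.
Qed.

Lemma iterate_weighted_gap_bounded : exists B, forall n, \sum_(k < n) gam k.+1 * gap k <= B.
Proof.
have [M hM] := is_cvgn_bounded err_cvg.
exists ((enorm (theta 0 - ts) ^+ 2 + M) / 2) => n.
have step k : enorm (theta k.+1 - ts) ^+ 2
              <= enorm (theta k - ts) ^+ 2 + (err k - 2 * (gam k.+1 * gap k)).
  by have [_ _] := iterate_step k; rewrite mulrA; lra.
have := telescope_le (a := fun k => enorm (theta k - ts) ^+ 2) step (leq0n n).
rewrite big_split /= sumrN -mulr_sumr !big_mkord.
have := hM n; have := sqr_ge0 (enorm (theta n - ts)); rewrite ler_norml => ? /andP[_ ?]; lra.
Qed.

(* the gaps F(theta_{k+1}) - min F are small infinitely often, so a cluster point minimizes F *)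
Lemma iterate_cluster_argmin : (fun n => \sum_(k < n) gam k.+1) @ \oo --> +oo ->
  exists2 p, argmin_set (Fsum f g) p & cluster_point theta p.
Proof.
move=> hdiv; have [B hB] := iterate_weighted_gap_bounded.
have gap0 k : 0 <= gap k by have [] := iterate_step k.
have small := weighted_sum_bounded_small (fun k => ltW (@hgam_pos k.+1 isT)) gap0 hdiv hB.
have small_gap k : exists n, (k <= n)%N /\ gap n < k.+1%:R^-1.
  have e0 : 0 < k.+1%:R^-1 :> R by rewrite invr_gt0 ltr0n.
  by have [n kn hn] := small _ e0 k; exists n.
have [phi hphi] := choice small_gap.
have [M hM] := is_cvgn_bounded dist2_cvg.
have bounded k : enorm (theta (phi k).+1 - ts) ^+ 2 <= M.
  by have := hM (phi k).+1; rewrite ger0_norm ?sqr_ge0.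
have [p clp] := bounded_cluster_point (u := fun k => theta (phi k).+1) bounded.
have Fp : (g p + (f p)%:E <= Fs%:E)%E.
  apply: (lsc_at_cluster_le (psi := fun z => (g z + (f z)%:E)%E) _ clp).
    by apply: lsc_atD => //; [exact: hl | exact: (gradient_lsc_at hgrad)].
  move=> k; have [_ + _] := iterate_step (phi k); rewrite /Fsum addeC => ->.
  by rewrite lee_fin lerD2l ltW // (hphi k).2.
exists p; first by move=> y; apply: le_trans (hts y); rewrite FsE /Fsum addeC.
by apply: (cluster_point_subseq (phi := fun k => (phi k).+1) _ clp) => k; exact: leqW (hphi k).1.
Qed.

End ForwardBackwardIterates.

Theorem theorem4 (R : realType) (d : nat)
  (f : 'rV[R]_d -> R) (gradf : 'rV[R]_d -> 'rV[R]_d) (g : 'rV[R]_d -> \bar R)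
  (L : R)
  (hg_nominf : no_minfty g) (hg_proper : proper_fun g)
  (hg_convex : convex_ext g) (hg_lsc : lsc_ext g)
  (hf_grad : is_gradient f gradf) (hL : 0 < L)
  (hf_lip : lipschitz_with L gradf)
  (hf_convex : convex_real f)
  (hargmin : exists x, argmin_set (Fsum f g) x)
  (gam : nat -> R) (theta : nat -> 'rV[R]_d) (H : nat -> 'rV[R]_d)
  (hgam_pos : forall n, (1 <= n)%N -> 0 < gam n)
  (hgam_le : forall n, (1 <= n)%N -> gam n <= 1 / L)
  (hgam_noninc : forall n, (1 <= n)%N -> gam n.+1 <= gam n)
  (htheta0 : dom g (theta 0))
  (hrec : forall n, theta n.+1 = prox g (gam n.+1) (theta n - gam n.+1 *: H n.+1)) :
  let eta := fun n => H n.+1 - gradf (theta n) in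
  let T := fun n => Tmap g gradf (gam n.+1) (theta n) in
  (forall ts, argmin_set (Fsum f g) ts -> forall m n, (m <= n)%N ->
     enorm (theta n.+1 - ts) ^+ 2 <=
       enorm (theta m - ts) ^+ 2
       - 2 * (\sum_(m <= k < n.+1) gam k.+1 * dotp (T k - ts) (eta k))
       + 2 * (\sum_(m <= k < n.+1) gam k.+1 ^+ 2 * enorm (eta k) ^+ 2))
  /\
  ((forall ts, argmin_set (Fsum f g) ts ->
      cvgn (fun n => \sum_(k < n) gam k.+1 * dotp (T k - ts) (eta k))) ->
   cvgn (fun n => \sum_(k < n) gam k.+1 ^+ 2 * enorm (eta k) ^+ 2) ->
   (forall ts, argmin_set (Fsum f g) ts -> cvgn (fun n => enorm (theta n - ts)))
   /\
   ((fun n => \sum_(k < n) gam k.+1) @ \oo --> +oo ->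
    exists2 tinf, argmin_set (Fsum f g) tinf &
      (fun n => enorm (theta n - tinf)) @ \oo --> 0)).
Proof.
move=> eta T; split=> [ts hts m n mn|hsum_dot hsum_eta].
  exact: (iterate_dist_bound hg_nominf hg_proper hg_convex hg_lsc hf_grad hL hf_lip hf_convex
           hargmin hgam_pos hgam_le hrec hts mn).
have dist_cvg ts (hts : argmin_set (Fsum f g) ts) : cvgn (fun n => enorm (theta n - ts)).
  exact: (iterate_dist_cvg hg_nominf hg_proper hg_convex hg_lsc hf_grad hL hf_lip hf_convex
           hargmin hgam_pos hgam_le hrec hts (hsum_dot ts hts) hsum_eta).
split=> // hdiv; have [ts hts] := hargmin.
have [p pmin clp] := iterate_cluster_argmin hg_nominf hg_proper hg_convex hg_lsc hf_grad hL
  hf_lip hf_convex hargmin hgam_pos hgam_le hrec hts (hsum_dot ts hts) hsum_eta hdiv.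
by exists p => //; exact: cvgn_dist_cluster_point (dist_cvg p pmin) clp.
Qed.
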